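(* Let $A=(a(x),dF(x))$ and $B=(b(x),dF(x))$ be games. If $f(p)\ge h(p)$ for each $p\in[0,1]$, then $g$ is continuous on $[0,1]$.
   Context: A game is a pair $(a(x),dF(x))$ with $dF$ a probability measure on $\mathbb{R}$ and $a\ge0$ measurable with finite positive integral. A real $r$ is fixed; conventions $\exp(-\infty)=0$, $1/(+\infty)=0$. For $p\in[0,1]$ put $c_p(x):=pa(x)+(1-p)b(x)$, $f(p):=\exp(\int\log c_p\,dF)/e^r$, $h(p):=1/\int\frac{1}{c_p(x)}dF(x)$. $g(p)$ denotes the value $u>0$ such that for some $t_u$ (with $0<t_u\le1$) the system $\exp\big(\int\log(\frac{c_p(x)}{u}t_u-t_u+1)\,dF(x)\big)=e^r$, $\int\frac{c_p(x)-u}{c_p(x)t_u-ut_u+u}\,dF(x)=0$ holds; such a solution is unique when it exists, and it exists for every $p$ under the hypothesis $f\ge h$. *)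

From HB Require Import structures.
From mathcomp Require Import all_boot all_order all_algebra.
From mathcomp Require Import all_classical all_reals all_analysis.
Set Implicit Arguments. Unset Strict Implicit. Unset Printing Implicit Defensive.
Import Order.TTheory GRing.Theory Num.Theory.
Local Open Scope ring_scope.
Local Open Scope ereal_scope.

Section Game.
Context {R : realType}.

Definition is_game (a : R -> R) (dF : probability (measurableTypeR R) R) : Prop :=
  [/\ (forall x, 0 <= a x)%R,
      measurable_fun [set: measurableTypeR R] a,
      0 < \int[dF]_x (a x)%:E & \int[dF]_x (a x)%:E < +oo].

Definition cp (a b : R -> R) (p : R) (x : R) : R := (p * a x + (1 - p) * b x)%R.

Definition elog (x : R) : \bar R := if (0 < x)%R then (ln x)%:E else -oo.

Definition eexp (y : \bar R) : \bar R :=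
  match y with EFin r => (expR r)%:E | +oo => +oo | -oo => 0 end.

Definition erecip (x : R) : \bar R := if (0 < x)%R then (x^-1)%:E else +oo.

Definition einv (y : \bar R) : \bar R :=
  match y with EFin r => (r^-1)%:E | _ => 0 end.

Variables (a b : R -> R) (dF : probability (measurableTypeR R) R) (r : R).

Definition f_fun (p : R) : \bar R :=
  eexp (\int[dF]_x elog (cp a b p x)) * (expR (- r))%:E.

Definition h_fun (p : R) : \bar R := einv (\int[dF]_x erecip (cp a b p x)).

Definition g_spec (p u : R) : Prop :=
  (0 < u)%R /\ exists t : R, [/\ (0 < t <= 1)%R,
    eexp (\int[dF]_x elog (cp a b p x / u * t - t + 1)%R) = (expR r)%:E &
    \int[dF]_x ((cp a b p x - u) / (cp a b p x * t - u * t + u))%:E = 0].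

End Game.

From HB Require Import structures.
From mathcomp Require Import all_boot all_order all_algebra.
From mathcomp Require Import all_classical all_reals all_analysis.
From mathcomp Require Import measurable_realfun.
From mathcomp.algebra_tactics Require Import ring lra.
Import Order.TTheory GRing.Theory Num.Theory.
Import numFieldNormedType.Exports.
Local Open Scope ring_scope.
Local Open Scope classical_set_scope.

(** For fixed p and u, s |-> \int log (c_p s / u - s + 1) dF is concave, and the
second equation of the system says that its derivative vanishes at t_u; so g(p)
is the u for which the maximum over s in [0, 1] of this log-growth equals r.
Continuity of g at p then rests on two comparisons of these growth functions.
For q near p, c_q >= k c_p with k close to 1; if g(q) < k g(p), rescaling the
betting fraction pushes the log-growth for (q, g(q)) above r, which is
impossible.  Also c_q <= c_p + |q - p| (a + b); if g(q) >= l g(p) with l > 1,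
the log-growth for (q, g(q)) at t_(g(q)) is at most the one for (p, g(p)) at a
smaller fraction, minus a gain of order (l - 1) t coming from the factor l, plus
an error of order |q - p| t; so it stays below r, a contradiction. *)

Section measurable_integral_le.
Context {d} {T : measurableType d} {R : realType} {mu : {measure set T -> \bar R}}.
Local Open Scope ereal_scope.

Lemma le_measurable_integral {f g : T -> \bar R} :
  measurable_fun setT f -> measurable_fun setT g ->
  (forall x, f x <= g x) -> \int[mu]_x f x <= \int[mu]_x g x.
Proof.
move=> mf mg fg; rewrite integralE [leRHS]integralE leeB//.
- apply: ge0_le_integral => //; [exact: measurable_funepos..|].
  by move=> x _; apply: (@funepos_le _ _ setT) => [y _|]; [exact: fg|exact: in_setT].
- apply: ge0_le_integral => //; [exact: measurable_funeneg..|].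
  by move=> x _; apply: (@funeneg_le _ _ setT) => [y _|]; [exact: fg|exact: in_setT].
Qed.

Lemma integrable_of_fin_num {f : T -> \bar R} : measurable_fun setT f ->
  \int[mu]_x f x \is a fin_num -> mu.-integrable setT f.
Proof.
move=> mf; rewrite integralE fin_numB => /andP[fp fn]; apply/integrableP; split => //.
rewrite (_ : (fun x => `|f x|) = (fun x => f^\+ x + f^\- x)); last first.
  by apply/funext => x; rewrite -/((abse \o f) x) fune_abse.
rewrite ge0_integralD//.
- by rewrite ltey_eq fin_numD fp fn.
- exact: measurable_funepos.
- exact: measurable_funeneg.
Qed.

Lemma ae_le_integral {f g : T -> \bar R} :
  measurable_fun setT f -> mu.-integrable setT g ->
  {ae mu, forall x, f x <= g x} -> \int[mu]_x f x <= \int[mu]_x g x.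
Proof.
move=> mf ig fg; have mg := measurable_int mu ig.
have mfg : measurable_fun setT (fun x => maxe (f x) (g x)) by exact: measurable_maxe.
have fmax x : f x <= maxe (f x) (g x) by rewrite le_max lexx.
apply: le_trans (le_measurable_integral mf mfg fmax) _.
rewrite (ae_eq_integral _ _ _ mfg mg)//; apply: filterS fg => x fgx _.
exact/max_idPr.
Qed.

End measurable_integral_le.

Section real_estimates.
Context {R : realType}.

Lemma ln_le_subr1 {x : R} : 0 < x -> ln x <= x - 1.
Proof. by move=> x0; have := @le_ln1Dx R (x - 1); rewrite subrKC; apply; lra. Qed.

Lemma lnD_le_div {x y z : R} : 0 < z -> z <= x -> 0 <= y -> ln (x + y) <= ln x + y / z.
Proof.
move=> z0 zx y0; have x0 : 0 < x by exact: lt_le_trans zx.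
have -> : x + y = x * (1 + y / x) by field; rewrite gt_eqF.
have yx0 : 0 <= y / x := divr_ge0 y0 (ltW x0).
have yx1 : 0 < 1 + y / x by lra.
rewrite lnM ?posrE// lerD2l.
apply: le_trans (le_ln1Dx _) _; first by lra.
by apply: ler_wpM2l => //; rewrite lef_pV2 ?posrE.
Qed.

Lemma ln_wealth_perturbed {l t : R} : 1 < l -> 0 < t <= 1 ->
  exists2 s, 0 <= s < 1 & forall y y' e, 0 <= y -> 0 <= e -> l * y' <= y + e ->
    0 < y' * t - t + 1 ->
    ln (y' * t - t + 1) <=
      ln (y * s - s + 1) - (l - 1) * t / (2 * l) + 2 * t / (l - 1) * e.
Proof.
move=> l1 /andP[t0 t1]; have l0 : 0 < l by lra.
(* K s = t / l and K (1 - s) = m / l >= 1 - t give the bound [X_le] below, and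
   m >= (l - 1) / 2 keeps 1 - s, hence the wealth at s, away from 0. *)
pose m := l - (l + 1) * t / 2; pose s := t / (m + t); pose K := (m + t) / l.
have m_ge : (l - 1) / 2 <= m.
  have : 0 <= (l + 1) * (1 - t) by rewrite mulr_ge0 ?subr_ge0//; lra.
  rewrite /m; lra.
have m0 : 0 < m by apply: lt_le_trans m_ge; rewrite divr_gt0 ?subr_gt0.
have mt0 : 0 < m + t by lra.
have s0 : 0 < s by rewrite divr_gt0.
have s1 : 1 - s = m / (m + t) by rewrite /s; field; rewrite gt_eqF.
have s1_gt0 : 0 < 1 - s by rewrite s1 divr_gt0.
exists s; first by rewrite ltW//= -subr_gt0.
move=> y y' e y0 e0 yy' X0.
have K0 : 0 < K by rewrite divr_gt0.
have Z_ge : 1 - s <= y * s - s + 1 by have := mulr_ge0 y0 (ltW s0); lra.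
have X_le : y' * t - t + 1 <= K * ((y * s - s + 1) + s * e).
  have -> : K * ((y * s - s + 1) + s * e) = m / l + t / l * (y + e).
    by rewrite /K /s; field; rewrite !gt_eqF.
  have : t / l * (l * y') <= t / l * (y + e) by rewrite ler_wpM2l// divr_ge0// ltW.
  have -> : t / l * (l * y') = y' * t by field; rewrite gt_eqF.
  have : 1 - t <= m / l.
    rewrite ler_pdivlMr// /m; have : 0 <= (l - 1) * t by rewrite mulr_ge0 ?subr_ge0 ?ltW.
    lra.
  lra.
have Zs0 : 0 < (y * s - s + 1) + s * e by have := mulr_ge0 (ltW s0) e0; lra.
have := lnD_le_div s1_gt0 Z_ge (mulr_ge0 (ltW s0) e0).
have := ln_le_subr1 K0.
have : ln (y' * t - t + 1) <= ln K + ln ((y * s - s + 1) + s * e).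
  by rewrite -lnM ?posrE// ler_ln ?posrE// mulr_gt0.
have -> : K - 1 = - ((l - 1) * t / (2 * l)) by rewrite /K /m; field; rewrite gt_eqF.
have : s * e / (1 - s) <= 2 * t / (l - 1) * e.
  have -> : s * e / (1 - s) = t / m * e by rewrite s1 /s; field; rewrite !gt_eqF.
  rewrite ler_wpM2r// ler_pdivrMr// mulrAC ler_pdivlMr ?subr_gt0//.
  have -> : t * (l - 1) = 2 * t * ((l - 1) / 2) by field.
  by apply: ler_wpM2l m_ge; rewrite mulr_ge0 // ltW.
lra.
Qed.

Lemma measurable_inv : measurable_fun [set: R] GRing.inv.
Proof.
rewrite -(setvU [set 0]); apply/measurable_funU; [exact: measurableC|by []|].
split; last exact: measurable_fun_set1.
apply: open_continuous_measurable_fun.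
  exact/closed_openC/accessible_closed_set1/hausdorff_accessible.
by move=> x /set_mem /eqP x0; apply: inv_continuous.
Qed.

Lemma elogE {x : R} : 0 < x -> elog x = (ln x)%:E.
Proof. by move=> x0; rewrite /elog x0. Qed.

Lemma elog_le (x : R) (z : \bar R) : (0 < x -> ((ln x)%:E <= z)%E) -> (elog x <= z)%E.
Proof. by rewrite /elog; case: ifP => [_ ->|_ _]//; exact: leNye. Qed.

Lemma eexp_EFin_inj (y : \bar R) (z : R) : eexp y = (expR z)%:E -> y = z%:E.
Proof.
case: y => [y /= [/expR_inj ->]//|//|/= [] h].
by have := expR_gt0 z; rewrite -h ltxx.
Qed.

Lemma near_scaled_le {k p : R} : k < 1 -> 0 <= p <= 1 ->
  \forall q \near p, 0 <= q <= 1 -> k * p <= q /\ k * (1 - p) <= 1 - q.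
Proof.
move=> k1 /andP[p0 p1].
have lower : \forall q \near p, 0 <= q -> k * p <= q.
  have [->|p_gt0] := eqVneq p 0; first by near=> q; rewrite mulr0.
  have : k * p < p by rewrite gtr_pMl// lt_def p_gt0.
  by move/lt_nbhsr; apply: filterS => q /ltW.
have upper : \forall q \near p, q <= 1 -> k * (1 - p) <= 1 - q.
  have [->|p_lt1] := eqVneq p 1; first by near=> q; rewrite subrr mulr0 subr_ge0.
  have kp : k * (1 - p) < 1 - p by rewrite gtr_pMl// subr_gt0 lt_neqAle p_lt1.
  have /lt_nbhsl : p < 1 - k * (1 - p) by lra.
  by apply: filterS => q qlt _; lra.
near=> q => /andP[q0 q1]; split; [exact: (near lower)|exact: (near upper)].
Unshelve. all: by end_near.
Qed.

Lemma cvg_within_ratio (g : R -> R) (D : set R) (p : R) : 0 < g p ->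
  (forall l, 1 < l -> \forall q \near p, D q -> g q < l * g p) ->
  (forall k, 0 < k < 1 -> \forall q \near p, D q -> k * g p <= g q) ->
  g q @[q --> within D (nbhs p)] --> g p.
Proof.
move=> gp0 upper lower; apply/cvgrPdist_lt => e e0.
have k01 : 0 < g p / (g p + e) < 1.
  by rewrite divr_gt0 ?addr_gt0//= ltr_pdivrMr ?addr_gt0// mul1r ltrDl.
have l1 : 1 < 1 + e / g p by rewrite ltrDl divr_gt0.
apply: filterS2 (upper _ l1) (lower _ k01) => q hu hl Dq.
have := hu Dq; have := hl Dq; rewrite mulrDl mul1r divfK ?gt_eqF// ltr_norml.
have : g p - e < g p / (g p + e) * g p.
  rewrite mulrAC ltr_pdivlMr ?addr_gt0//.
  have := mulr_gt0 e0 e0; have -> : (g p - e) * (g p + e) = g p * g p - e * e by ring.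
  lra.
lra.
Qed.

End real_estimates.

Section growth.
Context {d} {T : measurableType d} {R : realType} (P : probability T R).

(* With y := c_p / u, [growth y s] is the left-hand side of the first equation
   of the system, before exponentiation. *)
Definition growth (y : T -> R) (s : R) : \bar R := \int[P]_x elog (y x * s - s + 1).

Lemma measurable_elog {f : T -> R} :
  measurable_fun setT f -> measurable_fun setT (fun x => elog (f x)).
Proof.
move=> mf; apply: measurable_fun_ifT.
- by apply: measurable_fun_ltr => //; exact: measurable_cst.
- by apply/measurable_EFinP; exact: measurableT_comp mf.
- exact: measurable_cst.
Qed.

Lemma measurable_wealth {y : T -> R} s :
  measurable_fun setT y -> measurable_fun setT (fun x => y x * s - s + 1).
Proof.
move=> my; apply: measurable_funD; last exact: measurable_cst.
by apply: measurable_funB; [exact: measurable_funM|exact: measurable_cst].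
Qed.

Lemma integrable_affine (al be : R) {e : T -> R} :
  P.-integrable setT (EFin \o e) ->
  P.-integrable setT (EFin \o (fun x => al + be * e x)).
Proof.
move=> ie; have -> : EFin \o (fun x => al + be * e x) =
  (EFin \o cst al) \+ (fun x => be%:E * (EFin \o e) x)%E by [].
apply: integrableD => //; first exact: finite_measure_integrable_cst.
exact: integrableZl.
Qed.

Lemma integralD_cst (f : T -> \bar R) (c : R) : P.-integrable setT f ->
  (\int[P]_x (f x + c%:E) = \int[P]_x f x + c%:E)%E.
Proof.
move=> intf.
rewrite (integralD measurableT intf (finite_measure_integrable_cst _ c _))//.
have -> : (\int[P]_x (EFin \o cst c) x = c%:E * P setT)%E by rewrite -integral_cst.
by rewrite probability_setT mule1.
Qed.

Lemma integral_affine (al be : R) {e : T -> R} :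
  P.-integrable setT (EFin \o e) ->
  (\int[P]_x (al + be * e x)%:E = al%:E + be%:E * \int[P]_x (e x)%:E)%E.
Proof.
move=> ie; have -> : (fun x => (al + be * e x)%:E) =
  (fun x => be%:E * (EFin \o e) x + al%:E)%E by apply/funext => x; rewrite addrC.
by rewrite integralD_cst ?integralZl 1?addeC//; exact: integrableZl.
Qed.

Lemma integrable_elog (f : T -> R) (sg : R) : 0 < sg -> (forall x, sg <= f x) ->
  P.-integrable setT (EFin \o f) -> P.-integrable setT (fun x => elog (f x)).
Proof.
move=> sg0 fsg iF; have mf := measurable_int P iF.
have {}mf : measurable_fun setT f by exact/measurable_EFinP.
apply: (le_integrable measurableT (measurable_elog mf) _
  (integrable_affine `|ln sg| 1 iF)) => x _.
have fx0 : 0 < f x := lt_le_trans sg0 (fsg x).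
rewrite elogE// !abse_EFin lee_fin mul1r.
rewrite [leRHS]ger0_norm; last by rewrite addr_ge0// ltW.
rewrite ler_norml; have := ln_le_subr1 fx0; have := ler_norm (- ln sg).
have : ln sg <= ln (f x) by rewrite ler_ln ?posrE.
have := normr_ge0 (ln sg); rewrite normrN; lra.
Qed.

Lemma growth_le_critical (y : T -> R) (t s : R) : measurable_fun setT y ->
  growth y t \is a fin_num ->
  (\int[P]_x ((y x - 1) / (y x * t - t + 1))%:E = 0)%E ->
  (growth y s <= growth y t)%E.
Proof.
(* s |-> log (X s x) is concave with derivative psi x at t. *)
move=> my fin_t crit; pose X u x := y x * u - u + 1.
pose psi x := (y x - 1) / X t x.
have mpsi : measurable_fun setT psi.
  apply: measurable_funM; first by apply: measurable_funB => //; exact: measurable_cst.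
  exact: measurableT_comp measurable_inv (measurable_wealth t my).
have ipsi : P.-integrable setT (EFin \o psi).
  by apply: integrable_of_fin_num; [exact/measurable_EFinP|rewrite crit].
have ilogt : P.-integrable setT (fun x => elog (X t x)).
  exact: integrable_of_fin_num (measurable_elog (measurable_wealth t my)) fin_t.
have := ae_le_integral (measurable_elog (measurable_wealth s my))
  (integrableD measurableT ilogt (integrableZl measurableT (s - t) ipsi)).
rewrite integralD//; last exact: integrableZl.
rewrite integralZl// crit mule0 adde0; apply.
apply: filterS (integrable_ae measurableT ilogt) => x /(_ I) fin_x.
have Xt0 : 0 < X t x by move: fin_x; rewrite /elog; case: ifP.
rewrite /= (elogE Xt0); apply: elog_le => Xs0; rewrite -EFinD lee_fin.
have Xs : X s x = X t x * (1 + (s - t) * psi x).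
  by rewrite /psi /X; field; rewrite gt_eqF.
have psi0 : 0 < 1 + (s - t) * psi x by rewrite -(pmulr_rgt0 _ Xt0) -Xs.
by rewrite -/(X s x) Xs lnM ?posrE// lerD2l le_ln1Dx// -subr_gt0 opprK addrC.
Qed.

Lemma growth_lt_scaled {y y' : T -> R} {mu t : R} :
  measurable_fun setT y -> measurable_fun setT y' -> 1 < mu ->
  (forall x, mu * y x <= y' x) -> 0 < t <= 1 -> growth y t \is a fin_num ->
  exists2 s, 0 < s <= 1 & (growth y t < growth y' s)%E.
Proof.
move=> my my' mu1 yy' /andP[t0 t1] fin_t.
(* s is chosen so that M (y t - t + 1) = s mu y - s + 1. *)
pose s := t / (mu - (mu - 1) * t); pose M := 1 + s * (mu - 1).
have den_ge1 : 1 <= mu - (mu - 1) * t.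
  have : (mu - 1) * t <= mu - 1 by rewrite ler_piMr// subr_ge0 ltW.
  lra.
have s0 : 0 < s by rewrite divr_gt0//; lra.
have M1 : 1 < M by rewrite ltrDl mulr_gt0// subr_gt0.
have key x : M * (y x * t - t + 1) <= y' x * s - s + 1.
  have Mt : M * t = s * mu by rewrite /M /s; field; lra.
  have -> : M * (y x * t - t + 1) = s * (mu * y x) - s + 1.
    have -> : M * (y x * t - t + 1) = (M * t) * y x - M * t + M by ring.
    by rewrite Mt /M; ring.
  by rewrite lerD2r lerD2r mulrC ler_wpM2r// ltW.
exists s; first by rewrite s0 ler_pdivrMr ?mul1r//; lra.
have ilogt := integrable_of_fin_num (measurable_elog (measurable_wealth t my)) fin_t.
apply: (@lt_le_trans _ _ (growth y t + (ln M)%:E)%E).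
  by rewrite lteDl// lte_fin ln_gt0.
rewrite /growth -integralD_cst//; apply: le_measurable_integral => [||x].
- apply: emeasurable_funD; last exact: measurable_cst.
  exact: measurable_elog (measurable_wealth t my).
- exact: measurable_elog (measurable_wealth s my').
rewrite /elog; case: ifPn => [Xt0|]; last by rewrite addNye leNye.
have M0 : 0 < M := lt_trans ltr01 M1.
have XMt0 : 0 < M * (y x * t - t + 1) by rewrite mulr_gt0.
have X's0 := lt_le_trans XMt0 (key x).
by rewrite X's0 -EFinD lee_fin addrC -lnM ?posrE// ler_ln ?posrE.
Qed.

Lemma growth_lt_perturbed (y e y' : T -> R) {l t r : R} : 1 < l -> 0 < t <= 1 ->
  (forall x, 0 <= y x) -> (forall x, 0 <= e x) ->
  (forall x, l * y' x <= y x + e x) ->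
  P.-integrable setT (EFin \o y) -> P.-integrable setT (EFin \o e) ->
  measurable_fun setT y' ->
  (\int[P]_x (e x)%:E < ((l - 1) ^+ 2 / (4 * l))%:E)%E ->
  (forall s, 0 <= s <= 1 -> (growth y s <= r%:E)%E) -> (growth y' t < r%:E)%E.
Proof.
move=> l1 t01 y0 e0 yy' iy ie my' small_e growth_max.
have [s /andP[s0 s1] ln_le] := ln_wealth_perturbed l1 t01.
pose c := 2 * t / (l - 1); pose a0 := - ((l - 1) * t / (2 * l)).
have my : measurable_fun setT y by exact/measurable_EFinP/(measurable_int P iy).
have iZ : P.-integrable setT (fun x => elog (y x * s - s + 1)).
  apply: (@integrable_elog _ (1 - s)) => [|x|]; first by rewrite subr_gt0.
    by have := mulr_ge0 (y0 x) s0; lra.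
  rewrite (_ : EFin \o _ = EFin \o (fun x => (1 - s) + s * y x)).
    exact: integrable_affine.
  by apply/funext => x /=; congr EFin; ring.
have [E intE] : exists E : R, (\int[P]_x (e x)%:E = E%:E)%E.
  by exists (fine (\int[P]_x (e x)%:E)); rewrite fineK// integrable_fin_num.
apply: (@le_lt_trans _ _ (growth y s + (a0 + c * E)%:E)%E).
  rewrite EFinD EFinM -intE -integral_affine// /growth.
  rewrite -integralD//; last exact: integrable_affine.
  apply: le_measurable_integral => [||x].
  - exact: measurable_elog (measurable_wealth t my').
  - apply: emeasurable_funD; first exact: measurable_elog (measurable_wealth s my).
    exact: (measurable_int P (integrable_affine a0 c ie)).
  have Z0 : 0 < y x * s - s + 1 by have := mulr_ge0 (y0 x) s0; lra.
  apply: elog_le => X0; rewrite elogE// -EFinD lee_fin.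
  by have := ln_le _ _ _ (y0 x) (e0 x) (yy' x) X0; rewrite /a0 /c; lra.
apply: le_lt_trans (leeD2r _ (growth_max s _)) _; first by rewrite s0 ltW.
rewrite -EFinD lte_fin.
have c0 : 0 < c by case/andP: t01 => t0 _; rewrite divr_gt0 ?mulr_gt0 ?subr_gt0.
move: small_e; rewrite intE lte_fin -(ltr_pM2l c0) /a0.
have -> : c * ((l - 1) ^+ 2 / (4 * l)) = (l - 1) * t / (2 * l).
  by rewrite /c; field; rewrite !gt_eqF//; lra.
lra.
Qed.

End growth.

Section game.
Context {R : realType} {a b : R -> R} {P : probability (measurableTypeR R) R} {r : R}.
Hypotheses (ga : is_game a P) (gb : is_game b P).

Let ab_ge0 x : 0 <= a x + b x.
Proof. by case: ga gb => a0 _ _ _ [b0 _ _ _]; rewrite addr_ge0. Qed.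

Lemma integrable_game {c : R -> R} : is_game c P -> P.-integrable setT (EFin \o c).
Proof.
case=> c0 mc _ cfin; apply/integrableP; split; first exact/measurable_EFinP.
by under eq_integral do rewrite /= ger0_norm//.
Qed.

Lemma cp_ge0 p x : 0 <= p <= 1 -> 0 <= cp a b p x.
Proof.
case: ga gb => a0 _ _ _ [b0 _ _ _] /andP[p0 p1].
by rewrite addr_ge0// mulr_ge0// subr_ge0.
Qed.

Lemma measurable_cp_div p u : measurable_fun setT (fun x => cp a b p x / u).
Proof.
case: ga gb => _ ma _ _ [_ mb _ _]; apply: measurable_funM; last exact: measurable_cst.
by apply: measurable_funD; apply: measurable_funM => //; exact: measurable_cst.
Qed.

Lemma integrable_cp_div p u :
  P.-integrable setT (EFin \o (fun x => cp a b p x / u)).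
Proof.
have -> : EFin \o (fun x => cp a b p x / u) =
    ((fun x => (p / u)%:E * (EFin \o a) x) \+
     (fun x => ((1 - p) / u)%:E * (EFin \o b) x))%E.
  by apply/funext => x /=; rewrite /cp -EFinM -EFinD; congr EFin; ring.
by apply: integrableD => //; apply: integrableZl => //; exact: integrable_game.
Qed.

Lemma cp_le_dist p q x : cp a b q x <= cp a b p x + `|q - p| * (a x + b x).
Proof.
case: ga gb => a0 _ _ _ [b0 _ _ _].
have -> : cp a b q x = cp a b p x + (q - p) * (a x - b x) by rewrite /cp; ring.
rewrite lerD2l; apply: le_trans (ler_norm _) _; rewrite normrM ler_wpM2l//.
by apply: le_trans (ler_normB _ _) _; rewrite !ger0_norm.
Qed.

Lemma scaled_cp_le k p q x : k * p <= q -> k * (1 - p) <= 1 - q ->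
  k * cp a b p x <= cp a b q x.
Proof.
case: ga gb => a0 _ _ _ [b0 _ _ _] kpq kpq'.
rewrite /cp mulrDr !mulrA lerD// ler_wpM2r//.
Qed.

Lemma g_spec_growth {p u : R} : g_spec a b P r p u ->
  exists2 t, 0 < t <= 1 & growth P (fun x => cp a b p x / u) t = r%:E.
Proof. by case=> _ [t [t01 /eexp_EFin_inj gt _]]; exists t. Qed.

Lemma g_spec_growth_le {p u : R} : g_spec a b P r p u ->
  forall s, (growth P (fun x => cp a b p x / u)%R s <= r%:E)%E.
Proof.
case=> u0 [t [_ /eexp_EFin_inj gt crit]] s.
have {}gt : growth P (fun x => cp a b p x / u) t = r%:E := gt.
rewrite -gt; apply: growth_le_critical; last 2 first.
- by rewrite gt.
- rewrite -crit; apply: eq_integral => x _; congr EFin.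
  have -> : cp a b p x / u - 1 = (cp a b p x - u) / u by field; rewrite gt_eqF.
  have -> : cp a b p x / u * t - t + 1 = (cp a b p x * t - u * t + u) / u.
    by field; rewrite gt_eqF.
  by rewrite invf_div mulrA divfK ?gt_eqF.
exact: measurable_cp_div.
Qed.

Lemma cp_div_le_perturbed p q u w l x :
  0 <= q <= 1 -> 0 < u -> 0 < l -> l * u <= w ->
  l * (cp a b q x / w) <= cp a b p x / u + `|q - p| / u * (a x + b x).
Proof.
move=> q01 u0 l0 luw; have w0 : 0 < w by apply: lt_le_trans luw; rewrite mulr_gt0.
rewrite mulrAC -mulrDl; apply: (@le_trans _ _ (cp a b q x / u)).
  rewrite mulrCA; apply: ler_wpM2l; first exact: cp_ge0.
  by rewrite ler_pdivrMr// mulrC ler_pdivlMr.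
by apply: ler_wpM2r; [rewrite invr_ge0 ltW|exact: cp_le_dist].
Qed.

Lemma integrable_ab : P.-integrable setT (EFin \o (fun x => a x + b x)).
Proof. by have := integrableD measurableT (integrable_game ga) (integrable_game gb). Qed.

Lemma integral_perturbation_small (p : R) {u eta : R} : 0 < u -> 0 < eta ->
  \forall q \near p, (\int[P]_x (`|q - p| / u * (a x + b x))%:E < eta%:E)%E.
Proof.
move=> u0 eta0; pose I := fine (\int[P]_x (a x + b x)%:E).
have intI : (\int[P]_x (a x + b x)%:E = I%:E)%E.
  by rewrite fineK ?integrable_fin_num// integrable_ab.
have I0 : 0 <= I by rewrite -lee_fin -intI integral_ge0// => x _; rewrite lee_fin.
have I1 : 0 < I + 1 by lra.
have d0 : 0 < eta * u / (I + 1) by rewrite divr_gt0 ?mulr_gt0.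
have : \forall q \near p, `|q - p| < eta * u / (I + 1).
  by apply/nbhs_ballP; exists (eta * u / (I + 1)) => // q; rewrite -ball_normE /= distrC.
apply: filterS => q qp.
under eq_integral do rewrite EFinM.
rewrite integralZl ?integrable_ab// intI -EFinM lte_fin.
apply: (@le_lt_trans _ _ (`|q - p| / u * (I + 1))).
  by apply: ler_wpM2l; [rewrite divr_ge0// ltW|lra].
by rewrite -ltr_pdivlMr// ltr_pdivrMr// mulrAC.
Qed.

Lemma g_spec_upper {p u l : R} : 0 <= p <= 1 -> g_spec a b P r p u -> 1 < l ->
  \forall q \near p, forall w, 0 <= q <= 1 -> g_spec a b P r q w -> w < l * u.
Proof.
move=> p01 gp l1; have [u0 _] := gp; have l0 : 0 < l by lra.
have eta0 : 0 < (l - 1) ^+ 2 / (4 * l).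
  by rewrite divr_gt0 ?exprn_gt0 ?mulr_gt0 ?subr_gt0.
have small := integral_perturbation_small p u0 eta0.
near=> q => w q01 gq; rewrite ltNge; apply/negP => luw.
have [t t01 growth_t] := g_spec_growth gq.
suff : (growth P (fun x => cp a b q x / w)%R t < r%:E)%E by rewrite growth_t ltxx.
apply: (growth_lt_perturbed P (fun x => cp a b p x / u)
  (fun x => `|q - p| / u * (a x + b x)) (fun x => cp a b q x / w) l1 t01).
- by move=> x; apply: divr_ge0; [exact: cp_ge0|exact: ltW].
- by move=> x; rewrite mulr_ge0// divr_ge0// ltW.
- by move=> x; exact: cp_div_le_perturbed.
- exact: integrable_cp_div.
- exact: integrableZl integrable_ab.
- exact: measurable_cp_div.
- exact: (near small q).
- by move=> s _; apply/(g_spec_growth_le gp s).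
Unshelve. all: by end_near.
Qed.

Lemma g_spec_lower {p u k : R} : 0 <= p <= 1 -> g_spec a b P r p u -> 0 < k < 1 ->
  \forall q \near p, forall w, 0 <= q <= 1 -> g_spec a b P r q w -> k * u <= w.
Proof.
move=> p01 gp /andP[k0 k1]; have [u0 _] := gp.
have [t t01 growth_t] := g_spec_growth gp.
have scaled := near_scaled_le k1 p01.
near=> q => w q01 gq; rewrite leNgt; apply/negP => wku; have [w0 _] := gq.
have [kpq kpq'] : k * p <= q /\ k * (1 - p) <= 1 - q by exact: (near scaled q).
have mu1 : 1 < k * u / w by rewrite ltr_pdivlMr// mul1r.
have yy' x : k * u / w * (cp a b p x / u) <= cp a b q x / w.
  have -> : k * u / w * (cp a b p x / u) = k * cp a b p x / w.
    by field; rewrite !gt_eqF.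
  by apply: ler_wpM2r; [rewrite invr_ge0 ltW|exact: scaled_cp_le].
have fin_t : growth P (fun x => cp a b p x / u) t \is a fin_num.
  by rewrite growth_t.
have [s _] := growth_lt_scaled P (measurable_cp_div p u) (measurable_cp_div q w)
  mu1 yy' t01 fin_t.
by rewrite growth_t; apply/negP; rewrite -leNgt; exact/(g_spec_growth_le gq s).
Unshelve. all: by end_near.
Qed.

End game.

Theorem lemmaD16 (R : realType) (a b : R -> R)
    (dF : probability (measurableTypeR R) R) (r : R) :
  is_game a dF -> is_game b dF ->
  (forall p : R, p \in `[0, 1] -> (h_fun a b dF p <= f_fun a b dF r p)%E) ->
  forall g : R -> R,
    (forall p : R, p \in `[0, 1] -> g_spec a b dF r p (g p)) ->
    {within `[(0:R), (1:R)], continuous g}.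
Proof.
(* f >= h only guarantees that g exists. *)
move=> ga gb _ g g_spec_g.
have spec01 (q : R) : `[0, 1] q -> 0 <= q <= 1 /\ g_spec a b dF r q (g q).
  move=> q01; have {}q01 : q \in `[0, 1] by rewrite inE.
  by split; [move: q01; rewrite inE /= in_itv|exact: g_spec_g].
apply/subspace_continuousP => p /spec01[p01 gp]; have [gp0 _] := gp.
apply: cvg_within_ratio => // [l l1|k k01].
- apply: filterS (g_spec_upper ga gb p01 gp l1) => q up /spec01[q01 gq].
  exact: up q01 gq.
- apply: filterS (g_spec_lower ga gb p01 gp k01) => q low /spec01[q01 gq].
  exact: low q01 gq.
Qed.
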